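(* Let $\mathcal H_A,\mathcal H_B$ be finite-dimensional Hilbert spaces, $U$ a unitary on $\mathcal H_A\otimes\mathcal H_B$, $\alpha,\alpha'$ density operators on $\mathcal H_A$ and $\beta,\beta'$ density operators on $\mathcal H_B$, with at least one of $\alpha,\beta$ not maximally mixed, such that $U(\alpha\otimes\beta)U^\dagger=\alpha'\otimes\beta'$, and assume $\alpha'$ is invertible. Let $\mathcal E[X]=\operatorname{Tr}_B[U(X\otimes\beta)U^\dagger]$. Then $\mathcal E$ is tabletop reversible for the prior $\alpha$; specifically, its Petz recovery map satisfies $$\hat{\mathcal E}_\alpha[X]=\operatorname{Tr}_B\!\left[U^\dagger(X\otimes\beta')U\right]\quad\text{for all operators }X\text{ on }\mathcal H_A.$$
   Context: For a channel $\mathcal E$ and a density operator $\alpha$ with $\mathcal E[\alpha]$ invertible, the Petz recovery map is $\hat{\mathcal E}_\alpha[X]=\sqrt{\alpha}\,\mathcal E^\dagger[\mathcal E[\alpha]^{-1/2}X\mathcal E[\alpha]^{-1/2}]\sqrt\alpha$, where $\mathcal E^\dagger$ is the Hilbert–Schmidt adjoint ($\operatorname{Tr}(\mathcal E[X]Y)=\operatorname{Tr}(X\mathcal E^\dagger[Y])$). A channel $\mathcal E[X]=\operatorname{Tr}_B[U(X\otimes\beta)U^\dagger]$ is tabletop reversible for the prior $\alpha$ if there exists a density operator $\beta'$ on $\mathcal H_B$ with $\hat{\mathcal E}_\alpha[X]=\operatorname{Tr}_B[U^\dagger(X\otimes\beta')U]$ for the same $U$. *)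

From HB Require Import structures.
From mathcomp Require Import all_boot all_order all_algebra.
From mathcomp Require Import reals.
From mathcomp.real_closed Require Import complex mxtens.
From Stdlib Require Import ClassicalEpsilon.

Set Implicit Arguments.
Unset Strict Implicit.
Unset Printing Implicit Defensive.

Import Order.TTheory GRing.Theory Num.Theory.
Local Open Scope ring_scope.

Section QDefs.
Variable R : realType.
Local Notation C := R[i].

Definition adjmx m n (A : 'M[C]_(m, n)) : 'M[C]_(n, m) :=
  (map_mx (fun x : C => x^*) A)^T.

Definition psd n (A : 'M[C]_n) : Prop :=
  A = adjmx A /\ forall v : 'cV[C]_n, 0 <= (adjmx v *m A *m v) 0 0.

Definition density n (A : 'M[C]_n) : Prop := psd A /\ \tr A = 1.

Definition unitary n (U : 'M[C]_n) : Prop := U *m adjmx U = 1%:M.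

Definition maximally_mixed n (A : 'M[C]_n) : Prop := A = (n%:R)^-1%:M.

(* the positive square root sqrt(A): the (unique) psd S with S S = A
   (chosen classically; 0 if A is not psd) *)
Definition psd_sqrt n (A : 'M[C]_n) : 'M[C]_n :=
  match excluded_middle_informative (exists S : 'M[C]_n, psd S /\ S *m S = A) with
  | left h => proj1_sig (constructive_indefinite_description _ h)
  | right _ => 0
  end.

Definition ptraceB n m (M : 'M[C]_(n * m)) : 'M[C]_n :=
  \matrix_(i, j) \sum_(k < m) M (mxtens_index (i, k)) (mxtens_index (j, k)).

(* Hilbert-Schmidt adjoint of a linear map f, characterised by
   Tr(f X * Y) = Tr(X * f^dag Y); written out on matrix units *)
Definition hs_adjoint n p (f : 'M[C]_n -> 'M[C]_p) (Y : 'M[C]_p) : 'M[C]_n :=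
  \matrix_(i, j) \tr (f (delta_mx j i) *m Y).

Definition channel n m (U : 'M[C]_(n * m)) (beta : 'M[C]_m) (X : 'M[C]_n)
  : 'M[C]_n := ptraceB (U *m (X *t beta) *m adjmx U).

Definition petz n (E : 'M[C]_n -> 'M[C]_n) (alpha X : 'M[C]_n) : 'M[C]_n :=
  let T := invmx (psd_sqrt (E alpha)) in
  psd_sqrt alpha *m hs_adjoint E (T *m X *m T) *m psd_sqrt alpha.

Definition tabletop_reversible n m (U : 'M[C]_(n * m)) (beta : 'M[C]_m)
  (alpha : 'M[C]_n) : Prop :=
  channel U beta alpha \in unitmx /\
  exists beta' : 'M[C]_m, density beta' /\
    forall X : 'M[C]_n,
      petz (channel U beta) alpha X = ptraceB (adjmx U *m (X *t beta') *m U).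
End QDefs.

(** Write [sqrt] for the positive square root.  Positive square roots are
    unique, so [sqrt] commutes with unitary conjugation and with tensor
    products; the hypothesis [U (alpha (x) beta) U^dag = alpha' (x) beta']
    therefore lifts to [U (sqrt alpha (x) sqrt beta) = (sqrt alpha' (x)
    sqrt beta') U].  Writing the Hilbert-Schmidt adjoint of the channel as
    [E^dag[Y] = Tr_B[(1 (x) beta) U^dag (Y (x) 1) U]] and moving
    [sqrt alpha (x) 1] and [1 (x) sqrt beta] inside the partial trace
    (the latter by cyclicity of [Tr_B] on operators acting on [H_B] only),
    the Petz map becomes [Tr_B[U^dag (sqrt alpha' Y sqrt alpha' (x) beta') U]]
    with [Y = alpha'^(-1/2) X alpha'^(-1/2)], i.e. [Tr_B[U^dag (X (x) beta') U]]. *)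

From HB Require Import structures.
From mathcomp Require Import all_boot all_order all_algebra.
From mathcomp Require Import reals.
From mathcomp.real_closed Require Import complex mxtens.
From mathcomp Require Import spectral sesquilinear.
From Stdlib Require Import ClassicalEpsilon.

Set Implicit Arguments.
Unset Strict Implicit.
Unset Printing Implicit Defensive.

Import Order.TTheory GRing.Theory Num.Theory.
Local Open Scope ring_scope.

Section ConjugateTranspose.
Variable R : realType.
Local Notation C := R[i].

Lemma adjmxE m n (A : 'M[C]_(m, n)) : adjmx A = (A ^t*)%sesqui.
Proof. by rewrite /adjmx map_trmx. Qed.

Lemma adjmxK m n (A : 'M[C]_(m, n)) : adjmx (adjmx A) = A.
Proof. by apply/matrixP => i j; rewrite !mxE conjCK. Qed.

Lemma adjmxM m n p (A : 'M[C]_(m, n)) (B : 'M[C]_(n, p)) :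
  adjmx (A *m B) = adjmx B *m adjmx A.
Proof. by rewrite /adjmx map_mxM trmx_mul. Qed.

Lemma adjmx_tens m n p q (A : 'M[C]_(m, n)) (B : 'M[C]_(p, q)) :
  adjmx (A *t B) = adjmx A *t adjmx B.
Proof. by apply/matrixP => i j; rewrite !mxE rmorphM. Qed.

Lemma adjmx_diag n (d : 'rV[C]_n) : (forall k, 0 <= d 0 k) ->
  adjmx (diag_mx d) = diag_mx d.
Proof.
move=> d_ge0; apply/matrixP => i j; rewrite !mxE eq_sym.
by case: eqP => [->|_]; rewrite ?mulr0n ?conjC0 // !mulr1n geC0_conj.
Qed.

Lemma adjmx_mulmx_ge0 n (w : 'cV[C]_n) : 0 <= (adjmx w *m w) 0 0.
Proof.
by rewrite mxE; apply: sumr_ge0 => k _; rewrite !mxE mulrC mul_conjC_ge0.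
Qed.

Lemma adjmx_mulmx_eq0 n (w : 'cV[C]_n) : (adjmx w *m w) 0 0 = 0 -> w = 0.
Proof.
rewrite mxE => w_norm0; apply/matrixP => k l; rewrite [l]ord1 mxE.
have term_ge0 j : true -> 0 <= adjmx w 0 j * w j 0.
  by rewrite !mxE mulrC mul_conjC_ge0.
have := psumr_eq0P term_ge0 w_norm0 (i := k) isT.
by rewrite !mxE mulrC => /eqP; rewrite mul_conjC_eq0 => /eqP.
Qed.

End ConjugateTranspose.

Section PartialTrace.
Variable R : realType.
Local Notation C := R[i].
Variables n m : nat.

Lemma big_mxtens_index (F : 'I_(n * m) -> C) :
  \sum_k F k = \sum_i \sum_j F (mxtens_index (i, j)).
Proof.
rewrite pair_big /=; apply: reindex.
exists (@mxtens_unindex n m) => [[a b] _|k _]; first by rewrite mxtens_indexK.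
exact: mxtens_unindexK.
Qed.

Lemma mulmx_mxtensE p q (M : 'M[C]_(p, n * m)) (N : 'M[C]_(n * m, q)) r c :
  (M *m N) r c =
  \sum_i \sum_l M r (mxtens_index (i, l)) * N (mxtens_index (i, l)) c.
Proof. by rewrite mxE big_mxtens_index. Qed.

Lemma ptraceB_tens (X : 'M[C]_n) (Y : 'M[C]_m) : ptraceB (X *t Y) = \tr Y *: X.
Proof.
apply/matrixP => i j; rewrite !mxE.
by under eq_bigr do rewrite tensmxE; rewrite -mulr_sumr mulrC.
Qed.

Lemma ptraceB_tensl (A : 'M[C]_n) (M : 'M[C]_(n * m)) :
  ptraceB ((A *t 1%:M) *m M) = A *m ptraceB M.
Proof.
apply/matrixP => i j; rewrite !mxE.
under eq_bigr do rewrite mulmx_mxtensE.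
under [RHS]eq_bigr do rewrite mxE mulr_sumr.
rewrite exchange_big; apply: eq_bigr => p _; apply: eq_bigr => k _.
under eq_bigr do rewrite tensmxE mxE.
rewrite (bigD1 k) //= eqxx mulr1 big1 ?addr0 // => l /negbTE.
by rewrite eq_sym => ->; rewrite mulr0 mul0r.
Qed.

Lemma ptraceB_tensr (A : 'M[C]_n) (M : 'M[C]_(n * m)) :
  ptraceB (M *m (A *t 1%:M)) = ptraceB M *m A.
Proof.
apply/matrixP => i j; rewrite !mxE.
under eq_bigr do rewrite mulmx_mxtensE.
under [RHS]eq_bigr do rewrite mxE mulr_suml.
rewrite exchange_big; apply: eq_bigr => p _; apply: eq_bigr => k _.
under eq_bigr do rewrite tensmxE mxE.
rewrite (bigD1 k) //= eqxx mulr1 big1 ?addr0 // => l /negbTE.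
by rewrite eq_sym => ->; rewrite !mulr0.
Qed.

Lemma mul1tens_mxE (B : 'M[C]_m) (M : 'M[C]_(n * m)) i k c :
  ((1%:M *t B) *m M) (mxtens_index (i, k)) c =
  \sum_l B k l * M (mxtens_index (i, l)) c.
Proof.
rewrite mulmx_mxtensE (bigD1 i) //= [X in _ + X]big1 ?addr0 => [|p /negbTE pi].
  by apply: eq_bigr => l _; rewrite tensmxE mxE eqxx mul1r.
by apply: big1 => l _; rewrite tensmxE mxE eq_sym pi mulr0n !mul0r.
Qed.

Lemma mulmx_tens1E (B : 'M[C]_m) (M : 'M[C]_(n * m)) r j k :
  (M *m (1%:M *t B)) r (mxtens_index (j, k)) =
  \sum_l M r (mxtens_index (j, l)) * B l k.
Proof.
rewrite mulmx_mxtensE (bigD1 j) //= [X in _ + X]big1 ?addr0 => [|p /negbTE pj].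
  by apply: eq_bigr => l _; rewrite tensmxE mxE eqxx mul1r.
by apply: big1 => l _; rewrite tensmxE mxE pj mulr0n mul0r mulr0.
Qed.

Lemma ptraceB_tens1C (B : 'M[C]_m) (M : 'M[C]_(n * m)) :
  ptraceB ((1%:M *t B) *m M) = ptraceB (M *m (1%:M *t B)).
Proof.
apply/matrixP => i j; rewrite !mxE.
under eq_bigr do rewrite mul1tens_mxE.
under [RHS]eq_bigr do rewrite mulmx_tens1E.
rewrite exchange_big; apply: eq_bigr => k _; apply: eq_bigr => l _.
exact: mulrC.
Qed.

Lemma mxtrace_ptraceB (M : 'M[C]_(n * m)) (Y : 'M[C]_n) :
  \tr (ptraceB M *m Y) = \tr (M *m (Y *t 1%:M)).
Proof.
by rewrite -ptraceB_tensr /mxtrace big_mxtens_index; under eq_bigr do rewrite mxE.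
Qed.

End PartialTrace.

Lemma eq_col_mx (T : Type) p q (A B : 'M[T]_(p, q)) :
  (forall k, col k A = col k B) -> A = B.
Proof.
by move=> eq_col; apply/matrixP => a k; have /matrixP/(_ a 0) := eq_col k; rewrite !mxE.
Qed.

Section PositiveSquareRoot.
Variable R : realType.
Local Notation C := R[i].
Variable n : nat.
Implicit Types (A S T W : 'M[C]_n) (d : 'rV[C]_n) (v : 'cV[C]_n).

Lemma adjmx_diag_mulmxE d v :
  (adjmx v *m diag_mx d *m v) 0 0 = \sum_k (v k 0)^* * d 0 k * v k 0.
Proof. by rewrite mul_mx_diag mxE; apply: eq_bigr => k _; rewrite !mxE. Qed.

Lemma psd_adjmx_diag W d : (forall k, 0 <= d 0 k) ->
  psd (adjmx W *m diag_mx d *m W).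
Proof.
move=> d_ge0; split; first by rewrite !adjmxM adjmxK adjmx_diag // mulmxA.
move=> v; rewrite -!mulmxA [diag_mx d *m _]mulmxA !mulmxA -adjmxM -mulmxA.
rewrite adjmx_diag_mulmxE; apply: sumr_ge0 => k _.
by rewrite mulrAC mulr_ge0 // mulrC mul_conjC_ge0.
Qed.

Lemma psd_spectral A : psd A -> exists P, exists d,
  [/\ P *m adjmx P = 1%:M, forall k, 0 <= d 0 k & A = adjmx P *m diag_mx d *m P].
Proof.
move=> [A_herm A_ge0].
have /hermitian_normalmx/orthomx_spectralP A_spec : A \is hermsymmx.
  by apply/is_hermitianmxP; rewrite expr0 scale1r -adjmxE -A_herm.
set P := spectralmx A in A_spec; set d := spectral_diag A in A_spec.
have P_unitary : P \is unitarymx by exact: spectral_unitarymx.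
have PP : P *m adjmx P = 1%:M by rewrite adjmxE; apply/unitarymxP.
rewrite invmx_unitary // -adjmxE in A_spec.
exists P, d; split => // k.
set e : 'cV[C]_n := delta_mx k 0.
have := A_ge0 (adjmx P *m e).
rewrite adjmxM adjmxK A_spec !mulmxA -(mulmxA _ P (adjmx P)) PP mulmx1.
rewrite -(mulmxA _ P (adjmx P)) PP mulmx1 adjmx_diag_mulmxE.
rewrite (bigD1 k) //= big1 ?addr0 => [|j /negbTE jk]; last by rewrite !mxE jk mulr0.
by rewrite !mxE !eqxx conjC1 mul1r mulr1.
Qed.

Lemma psd_sqrtP A : psd A -> psd (psd_sqrt A) /\ psd_sqrt A *m psd_sqrt A = A.
Proof.
move=> A_psd; rewrite /psd_sqrt; case: excluded_middle_informative => [?|[]].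
  by case: constructive_indefinite_description.
have [P [d [PP d_ge0 ->]]] := psd_spectral A_psd.
pose r : 'rV[C]_n := \row_k sqrtC (d 0 k).
have r_ge0 k : 0 <= r 0 k by rewrite mxE sqrtC_ge0.
exists (adjmx P *m diag_mx r *m P); split; first exact: psd_adjmx_diag.
rewrite !mulmxA -(mulmxA _ P (adjmx P)) PP mulmx1 -(mulmxA (adjmx P) (diag_mx r)).
rewrite mulmx_diag; congr (_ *m diag_mx _ *m _).
by apply/rowP => k; rewrite !mxE -expr2 sqrtCK.
Qed.

Lemma psd_eigen_sqr S (t : C) v : psd S -> 0 <= t ->
  S *m (S *m v) = (t * t) *: v -> S *m v = t *: v.
Proof.
move=> [S_herm S_ge0] t_ge0 SSv.
have [t0|t_neq0] := eqVneq t 0.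
  move: SSv; rewrite t0 mulr0 !scale0r => SSv; apply: adjmx_mulmx_eq0.
  by rewrite adjmxM -S_herm -mulmxA SSv mulmx0 mxE.
(* [w] is an eigenvector of [S] for [-t], which positivity of [S] forbids *)
set w := S *m v - t *: v.
have Sw : S *m w = - t *: w.
  by rewrite mulmxBr SSv -scalemxAr scalerBr !scaleNr scalerA opprK addrC.
suff /eqP : w = 0 by rewrite subr_eq0 => /eqP.
apply: adjmx_mulmx_eq0; apply/eqP.
have := S_ge0 w; rewrite -mulmxA Sw -scalemxAr mxE => Sw_ge0.
have : t * (adjmx w *m w) 0 0 == 0.
  by rewrite eq_le mulr_ge0 ?adjmx_mulmx_ge0 // andbT -oppr_ge0 -mulNr.
by rewrite mulf_eq0 (negbTE t_neq0).
Qed.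

Lemma mulmx_diag_delta d k :
  diag_mx d *m (delta_mx k 0 : 'cV_n) = d 0 k *: delta_mx k 0.
Proof.
apply/matrixP => x y; rewrite mul_diag_mx !mxE.
by case: (eqVneq x k) => [->|]; rewrite ?mulr0.
Qed.

Lemma psd_sqr_inj S T : psd S -> psd T -> S *m S = T *m T -> S = T.
Proof.
move=> S_psd T_psd SS_TT.
have [P [t [PP t_ge0 T_spec]]] := psd_spectral T_psd.
have TP : T *m adjmx P = adjmx P *m diag_mx t by rewrite T_spec -!mulmxA PP mulmx1.
(* An eigenvector of [T] for [t k] is one of [S] too, by [psd_eigen_sqr]. *)
suff SP : S *m adjmx P = adjmx P *m diag_mx t.
  by rewrite -[S]mulmx1 -(mulmx1C PP) mulmxA SP T_spec.
apply: eq_col_mx => k; rewrite !colE -!mulmxA mulmx_diag_delta -scalemxAr.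
apply: psd_eigen_sqr => //; rewrite !mulmxA SS_TT -(mulmxA T T) TP (mulmxA T) TP.
by rewrite -!mulmxA !mulmx_diag_delta -!scalemxAr mulmx_diag_delta -scalemxAr scalerA.
Qed.

Lemma psd_sqrtE S : psd S -> psd_sqrt (S *m S) = S.
Proof.
move=> S_psd; rewrite /psd_sqrt; case: excluded_middle_informative => [?|[]].
  case: constructive_indefinite_description => S' [S'_psd S'S'] /=.
  exact: psd_sqr_inj.
by exists S.
Qed.

End PositiveSquareRoot.

Section SquareRootCovariance.
Variable R : realType.
Local Notation C := R[i].

Lemma tens_diag_mx n m (d : 'rV[C]_n) (e : 'rV[C]_m) :
  diag_mx d *t diag_mx e =
  diag_mx (\row_k (d 0 (mxtens_unindex k).1 * e 0 (mxtens_unindex k).2)).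
Proof.
apply/matrixP => r c.
case: (mxtens_indexP r) => i k; case: (mxtens_indexP c) => j l.
rewrite tensmxE !mxE mxtens_indexK (inj_eq (can_inj (@mxtens_indexK n m))) xpair_eqE.
by case: (i == j); case: (k == l); rewrite ?mulr0n ?mulr1n ?mulr0 ?mul0r.
Qed.

Lemma psd_tens n m (A : 'M[C]_n) (B : 'M[C]_m) : psd A -> psd B -> psd (A *t B).
Proof.
move=> /psd_spectral [P [d [_ d_ge0 ->]]] /psd_spectral [Q [e [_ e_ge0 ->]]].
rewrite -!tensmx_mul -adjmx_tens tens_diag_mx.
by apply: psd_adjmx_diag => k; rewrite mxE mulr_ge0.
Qed.

Lemma psd_conj n (W S : 'M[C]_n) : psd S -> psd (W *m S *m adjmx W).
Proof.
move=> [S_herm S_ge0]; split; first by rewrite !adjmxM adjmxK -S_herm mulmxA.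
by move=> v; have := S_ge0 (adjmx W *m v); rewrite adjmxM adjmxK !mulmxA.
Qed.

Lemma psd_sqrt_tens n m (A : 'M[C]_n) (B : 'M[C]_m) : psd A -> psd B ->
  psd_sqrt (A *t B) = psd_sqrt A *t psd_sqrt B.
Proof.
move=> /psd_sqrtP [sA_psd sAsA] /psd_sqrtP [sB_psd sBsB].
by rewrite -{1}sAsA -{1}sBsB -tensmx_mul psd_sqrtE //; apply: psd_tens.
Qed.

Lemma psd_sqrt_unitary_conj n (U A : 'M[C]_n) : unitary U -> psd A ->
  psd_sqrt (U *m A *m adjmx U) = U *m psd_sqrt A *m adjmx U.
Proof.
move=> /mulmx1C UU /psd_sqrtP [sA_psd sAsA].
set sA := psd_sqrt A in sA_psd sAsA *.
suff -> : U *m A *m adjmx U = (U *m sA *m adjmx U) *m (U *m sA *m adjmx U).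
  by rewrite psd_sqrtE //; apply: psd_conj.
by rewrite -sAsA !mulmxA -(mulmxA _ (adjmx U) U) UU mulmx1.
Qed.

End SquareRootCovariance.

Lemma mxtrace_mul_delta (R : pzRingType) p (A : 'M[R]_p) i j :
  \tr (A *m delta_mx j i) = A i j.
Proof.
rewrite /mxtrace (bigD1 i) //= big1 ?addr0 => [|k /negbTE ki].
  rewrite mxE (bigD1 j) //= big1 ?addr0 => [|l /negbTE lj].
    by rewrite mxE !eqxx mulr1.
  by rewrite mxE lj mulr0.
by rewrite mxE big1 // => l _; rewrite mxE ki andbF mulr0.
Qed.

Section PetzRecovery.
Variable R : realType.
Local Notation C := R[i].
Variables n m : nat.
Implicit Types (U : 'M[C]_(n * m)).

Lemma hs_adjoint_channel U (beta : 'M[C]_m) (Y : 'M[C]_n) :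
  hs_adjoint (channel U beta) Y =
  ptraceB ((1%:M *t beta) *m (adjmx U *m (Y *t 1%:M) *m U)).
Proof.
apply/matrixP => i j; rewrite mxE /channel mxtrace_ptraceB.
rewrite -mxtrace_mul_delta mxtrace_ptraceB.
have -> : delta_mx j i *t beta = (delta_mx j i *t 1%:M) *m (1%:M *t beta).
  by rewrite tensmx_mul mulmx1 mul1mx.
by rewrite -!mulmxA mxtrace_mulC !mulmxA [RHS]mxtrace_mulC !mulmxA.
Qed.

Section SquareRootIntertwining.
Variables (U : 'M[C]_(n * m)) (a a' : 'M[C]_n) (b b' : 'M[C]_m).
Hypothesis U_unitary : unitary U.
Hypothesis conj_sqrt : U *m (a *t b) *m adjmx U = a' *t b'.

Let adjmx_mul_unitary : adjmx U *m U = 1%:M. Proof. exact: mulmx1C. Qed.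

Lemma mulmx_unitary_sqrt : U *m (a *t b) = (a' *t b') *m U.
Proof. by rewrite -conj_sqrt -[RHS]mulmxA adjmx_mul_unitary mulmx1. Qed.

Lemma sqrt_mulmx_adj_unitary : (a *t b) *m adjmx U = adjmx U *m (a' *t b').
Proof. by rewrite -conj_sqrt !mulmxA adjmx_mul_unitary mul1mx. Qed.

Lemma conj_hs_adjoint_channel (Y : 'M[C]_n) :
  a *m hs_adjoint (channel U (b *m b)) Y *m a =
  ptraceB (adjmx U *m ((a' *m Y *m a') *t (b' *m b')) *m U).
Proof.
rewrite hs_adjoint_channel -ptraceB_tensl -ptraceB_tensr.
set K := adjmx U *m (Y *t 1%:M) *m U.
have -> : (a *t 1%:M) *m ((1%:M *t (b *m b)) *m K) = (1%:M *t b) *m ((a *t b) *m K).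
  by rewrite !mulmxA !tensmx_mul !mulmx1 !mul1mx.
rewrite -(mulmxA (1%:M *t b)) ptraceB_tens1C -(mulmxA _ (a *t 1%:M)).
rewrite tensmx_mul mulmx1 mul1mx /K.
rewrite !mulmxA sqrt_mulmx_adj_unitary -!mulmxA mulmx_unitary_sqrt.
rewrite (mulmxA (Y *t 1%:M)) tensmx_mul (mulmxA (a' *t b')) tensmx_mul.
by rewrite mul1mx !mulmxA.
Qed.

End SquareRootIntertwining.

End PetzRecovery.

Theorem theorem3 (R : realType) (n m : nat) (U : 'M[R[i]]_(n * m))
  (alpha alpha' : 'M[R[i]]_n) (beta beta' : 'M[R[i]]_m) :
  unitary U ->
  density alpha -> density alpha' -> density beta -> density beta' ->
  ~ (maximally_mixed alpha /\ maximally_mixed beta) ->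
  U *m (alpha *t beta) *m adjmx U = alpha' *t beta' ->
  alpha' \in unitmx ->
  tabletop_reversible U beta alpha /\
  (forall X : 'M[R[i]]_n,
     petz (channel U beta) alpha X = ptraceB (adjmx U *m (X *t beta') *m U)).
Proof.
move=> U_unitary [alpha_psd _] [alpha'_psd _] [beta_psd _] [beta'_psd tr_beta']
  _ conj_eq alpha'_unit.
have channel_alpha : channel U beta alpha = alpha'.
  by rewrite /channel conj_eq ptraceB_tens tr_beta' scale1r.
have [_ sa'sa'] := psd_sqrtP alpha'_psd.
have [_ sbsb] := psd_sqrtP beta_psd.
have [_ sb'sb'] := psd_sqrtP beta'_psd.
have conj_sqrt : U *m (psd_sqrt alpha *t psd_sqrt beta) *m adjmx U =
                 psd_sqrt alpha' *t psd_sqrt beta'.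
  rewrite -[RHS]psd_sqrt_tens // -conj_eq -psd_sqrt_tens //.
  by apply/esym/psd_sqrt_unitary_conj => //; apply: psd_tens.
have sa'_unit : psd_sqrt alpha' \in unitmx.
  by move: alpha'_unit; rewrite -{1}sa'sa' unitmx_mul => /andP[].
have petzE X :
    petz (channel U beta) alpha X = ptraceB (adjmx U *m (X *t beta') *m U).
  rewrite /petz channel_alpha -sbsb.
  rewrite (conj_hs_adjoint_channel U_unitary conj_sqrt) sb'sb'.
  by rewrite -!mulmxA mulKVmx // mulVmx // mulmx1.
split=> //; split; first by rewrite channel_alpha.
by exists beta'.
Qed.
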